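(* Let $\varphi$ be an LTL formula over $2^{V_i}$ and let $\mathcal{A}_\varphi$ be an ACA with $\mathcal{L}(\mathcal{A}_\varphi)=\mathcal{L}(\varphi)$. Let $s$ be a strategy for process $p_i$. If $s$ is delay-dominant for $\mathcal{A}_\varphi$, then $s$ is remorsefree dominant for $\varphi$.
   Context: Automata. For a finite set $\Sigma$ of atomic propositions, an alternating co-Büchi automaton (ACA) over $2^\Sigma$ is a tuple $\mathcal{A}=(Q,q_0,\delta,F)$ with a finite set of states $Q$, initial state $q_0\in Q$, set of rejecting states $F\subseteq Q$, and transition function $\delta:Q\times 2^\Sigma\to\mathbb{B}^+(Q)$ into positive Boolean formulas over $Q$ given in disjunctive normal form; $\delta(q,a)$ is identified with the set of its disjuncts, each disjunct $c\in\delta(q,a)$ being a set of states. A run tree of $\mathcal{A}$ on $\sigma=\sigma_0\sigma_1\cdots\in(2^\Sigma)^\omega$ is a $Q$-labeled tree $(T,\ell)$ ($T\subseteq\mathbb{N}^*$ prefix-closed) with $\ell(\varepsilon)=q_0$ and $\{\ell(x')\mid x'\text{ a child of }x\}\in\delta(\ell(x),\sigma_{|x|})$ for every node $x$; it is accepting if every infinite branch visits $F$ only finitely often. $\mathcal{A}$ accepts $\sigma$ if some run tree on $\sigma$ is accepting; $\mathcal{L}(\mathcal{A})$ is the set of accepted words. For an LTL formula $\varphi$, $\mathcal{L}(\varphi)$ is the set of infinite words satisfying $\varphi$. (As implicit in the game below, each $\delta(q,a)$ and each of its disjuncts is nonempty.) Processes and strategies. A process $p_i$ has disjoint finite sets $I_i$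 of input and $O_i$ of output variables; $V_i=I_i\cup O_i$. A strategy for $p_i$ is a function $s:(2^{I_i})^*\to 2^{O_i}$ representable by a finite Moore machine. For $\gamma\in(2^{I_i})^\omega$ the computation $\mathrm{comp}(s,\gamma)\in(2^{V_i})^\omega$ is given by $\mathrm{comp}(s,\gamma)_j=\gamma_j\cup s(\gamma_0\cdots\gamma_{j-1})$ for all $j\ge 0$. Delay-dominance game. Let $\mathcal{A}=(Q,q_0,\delta,F)$ be an ACA and $\sigma,\sigma'$ infinite words over its alphabet. The game $(\mathcal{A},\sigma,\sigma')$ is played between Duplicator (Player 0) and Spoiler (Player 1) on positions of the forms $((p,q),j)$ and $((p,q,c,c'),j)$ (owned by Spoiler) and $((p,q,c),j)$ and $((p,q,c,q'),j)$ (owned by Duplicator), with $p,q,q'\in Q$, $c,c'\subseteq Q$, $j\in\mathbb{N}$. Moves: from $((p,q),j)$ to $((p,q,c),j)$ with $c\in\delta(p,\sigma_j)$; from $((p,q,c),j)$ to $((p,q,c,c'),j)$ with $c'\in\delta(q,\sigma'_j)$; from $((p,q,c,c'),j)$ to $((p,q,c,q'),j)$ with $q'\in c'$; from $((p,q,c,q'),j)$ to $((p',q'),j+1)$ with $p'\in c$. The initial position is $((q_0,q_0),0)$. For a position whose state tuple is $(p,q)$, $(p,q,c)$, $(p,q,c,c')$ or $(p,q,c,q')$, its alternative state is $p$ and its dominant state is $q$. A play $\rho_0\rho_1\cdots$ is won by Duplicator iff for every $k$ such that the dominant state of $\rho_k$ lies in $F$ there is $k'\ge k$ such that the alternative state of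 $\rho_{k'}$ lies in $F$. A strategy of a player maps finite play prefixes ending in one of its positions to a legal successor; a Duplicator strategy is winning if every play from the initial position consistent with it is won by Duplicator. Delay-dominance. For strategies $s,t$ of $p_i$, an ACA $\mathcal{A}$ over $2^{V_i}$ and $\gamma\in(2^{I_i})^\omega$: $s$ delay-dominates $t$ on $\gamma$ if Duplicator has a winning strategy in $(\mathcal{A},\mathrm{comp}(t,\gamma),\mathrm{comp}(s,\gamma))$; $s$ delay-dominates $t$ if this holds for all $\gamma$; $s$ is delay-dominant for $\mathcal{A}$ (and $p_i$) if it delay-dominates every strategy $t$ for $p_i$. Remorsefree dominance. A strategy $s$ for $p_i$ is winning for $\varphi$ if $\mathrm{comp}(s,\gamma)\models\varphi$ for all $\gamma\in(2^{I_i})^\omega$; $s$ is remorsefree dominant for $\varphi$ if for every strategy $t$ for $p_i$ and every $\gamma\in(2^{I_i})^\omega$, $\mathrm{comp}(t,\gamma)\models\varphi$ implies $\mathrm{comp}(s,\gamma)\models\varphi$. *)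

From mathcomp Require Import all_boot.
Set Implicit Arguments. Unset Strict Implicit. Unset Printing Implicit Defensive.

Definition word (V : finType) := nat -> {set V}.

Inductive ltl (V : finType) : Type :=
| LTrue : ltl V
| LAtom : V -> ltl V
| LNot : ltl V -> ltl V
| LAnd : ltl V -> ltl V -> ltl V
| LNext : ltl V -> ltl V
| LUntil : ltl V -> ltl V -> ltl V.

Fixpoint ltl_holds (V : finType) (sigma : word V) (i : nat) (phi : ltl V) : Prop :=
  match phi with
  | LTrue => True
  | LAtom a => a \in sigma i
  | LNot f => ~ ltl_holds sigma i f
  | LAnd f g => ltl_holds sigma i f /\ ltl_holds sigma i g
  | LNext f => ltl_holds sigma i.+1 f
  | LUntil f g => exists k, i <= k /\ ltl_holds sigma k g /\
                    (forall m, i <= m -> m < k -> ltl_holds sigma m f)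
  end.

Definition ltl_sat (V : finType) (sigma : word V) (phi : ltl V) : Prop :=
  ltl_holds sigma 0 phi.

(* delta q a is the set of disjuncts (each a set of states) of the DNF formula. *)
Record aca (V : finType) := ACA {
  aca_state : finType;
  aca_init : aca_state;
  aca_delta : aca_state -> {set V} -> {set {set aca_state}};
  aca_rej : {set aca_state}
}.
Arguments aca_state {V} a.
Arguments aca_init {V} a.
Arguments aca_delta {V} a _ _.
Arguments aca_rej {V} a.

Unset Implicit Arguments.
Arguments ltl_holds {V} sigma i phi.
Arguments ltl_sat {V} sigma phi.

Definition aca_wf {V : finType} (A : aca V) : Prop :=
  forall q a, aca_delta A q a != set0 /\
              (forall c, c \in aca_delta A q a -> c != set0).

Definition run_tree {V : finType} (A : aca V) (sigma : word V)
    (T : seq nat -> Prop) (l : seq nat -> aca_state A) : Prop :=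
  T [::] /\
  (forall x n, T (rcons x n) -> T x) /\
  l [::] = aca_init A /\
  (forall x, T x ->
     exists2 c, c \in aca_delta A (l x) (sigma (size x)) &
       forall q, q \in c <-> exists n, T (rcons x n) /\ l (rcons x n) = q).

Definition branch (T : seq nat -> Prop) (b : nat -> seq nat) : Prop :=
  b 0 = [::] /\ forall k, T (b k) /\ exists n, b k.+1 = rcons (b k) n.

Definition accepting_run {V : finType} (A : aca V)
    (T : seq nat -> Prop) (l : seq nat -> aca_state A) : Prop :=
  forall b, branch T b -> exists N, forall k, N <= k -> l (b k) \notin aca_rej A.

Definition aca_accepts {V : finType} (A : aca V) (sigma : word V) : Prop :=
  exists T l, run_tree A sigma T l /\ accepting_run A T l.

(* A strategy is a function (2^{I})^* -> 2^{O}, representable by a finite Moore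
   machine; we represent it by a function on seq {set V} and only constrain it
   on sequences of input letters (subsets of I). *)
Definition is_strategy {V : finType} (I O : {set V}) (s : seq {set V} -> {set V}) : Prop :=
  (forall w, all (fun a : {set V} => a \subset I) w -> s w \subset O) /\
  exists (M : finType) (m0 : M) (md : M -> {set V} -> M) (mo : M -> {set V}),
    forall w, all (fun a : {set V} => a \subset I) w -> s w = mo (foldl md m0 w).

Definition input_word {V : finType} (I : {set V}) (gamma : word V) : Prop :=
  forall j, gamma j \subset I.

Definition comp {V : finType} (s : seq {set V} -> {set V}) (gamma : word V) : word V :=
  fun j => gamma j :|: s [seq gamma k | k <- iota 0 j].

Set Implicit Arguments.
Inductive gpos (Q : finType) : Type :=
| PosS1 : Q -> Q -> nat -> gpos Q
| PosD1 : Q -> Q -> {set Q} -> nat -> gpos Q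
| PosS2 : Q -> Q -> {set Q} -> {set Q} -> nat -> gpos Q
| PosD2 : Q -> Q -> {set Q} -> Q -> nat -> gpos Q.

Unset Implicit Arguments.
Definition dup_owned {Q : finType} (x : gpos Q) : bool :=
  match x with PosD1 _ _ _ _ | PosD2 _ _ _ _ _ => true | _ => false end.

Definition alt_state {Q : finType} (x : gpos Q) : Q :=
  match x with
  | PosS1 p _ _ | PosD1 p _ _ _ | PosS2 p _ _ _ _ | PosD2 p _ _ _ _ => p end.

Definition dom_state {Q : finType} (x : gpos Q) : Q :=
  match x with
  | PosS1 _ q _ | PosD1 _ q _ _ | PosS2 _ q _ _ _ | PosD2 _ q _ _ _ => q end.

Definition gmove {V : finType} (A : aca V) (sigma sigma' : word V)
    (x y : gpos (aca_state A)) : Prop :=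
  match x, y with
  | PosS1 p q j, PosD1 p1 q1 c j1 =>
      [/\ p1 = p, q1 = q, j1 = j & c \in aca_delta A p (sigma j)]
  | PosD1 p q c j, PosS2 p1 q1 c1 c' j1 =>
      [/\ p1 = p, q1 = q, c1 = c, j1 = j & c' \in aca_delta A q (sigma' j)]
  | PosS2 p q c c' j, PosD2 p1 q1 c1 q' j1 =>
      [/\ p1 = p, q1 = q, c1 = c, j1 = j & q' \in c']
  | PosD2 p q c q' j, PosS1 p' q1 j1 =>
      [/\ q1 = q', j1 = j.+1 & p' \in c]
  | _, _ => False
  end.

Definition ginit {V : finType} (A : aca V) : gpos (aca_state A) :=
  PosS1 (aca_init A) (aca_init A) 0.

Definition is_play {V : finType} (A : aca V) (sigma sigma' : word V)
    (rho : nat -> gpos (aca_state A)) : Prop :=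
  rho 0 = ginit A /\ forall k, gmove A sigma sigma' (rho k) (rho k.+1).

Definition is_play_prefix {V : finType} (A : aca V) (sigma sigma' : word V)
    (h : seq (gpos (aca_state A))) : Prop :=
  0 < size h /\ nth (ginit A) h 0 = ginit A /\
  forall i, i.+1 < size h ->
    gmove A sigma sigma' (nth (ginit A) h i) (nth (ginit A) h i.+1).

Definition prefix_of {T : Type} (rho : nat -> T) (k : nat) : seq T :=
  [seq rho i | i <- iota 0 k.+1].

Definition dup_strategy {V : finType} (A : aca V) (sigma sigma' : word V)
    (f : seq (gpos (aca_state A)) -> gpos (aca_state A)) : Prop :=
  forall h, is_play_prefix A sigma sigma' h ->
    dup_owned (last (ginit A) h) ->
    gmove A sigma sigma' (last (ginit A) h) (f h).

Definition consistent_with {V : finType} (A : aca V)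
    (f : seq (gpos (aca_state A)) -> gpos (aca_state A))
    (rho : nat -> gpos (aca_state A)) : Prop :=
  forall k, dup_owned (rho k) -> rho k.+1 = f (prefix_of rho k).

Definition dup_wins_play {V : finType} (A : aca V) (rho : nat -> gpos (aca_state A)) : Prop :=
  forall k, dom_state (rho k) \in aca_rej A ->
    exists2 k', k <= k' & alt_state (rho k') \in aca_rej A.

Definition dup_winning {V : finType} (A : aca V) (sigma sigma' : word V)
    (f : seq (gpos (aca_state A)) -> gpos (aca_state A)) : Prop :=
  dup_strategy A sigma sigma' f /\
  forall rho, is_play A sigma sigma' rho -> consistent_with A f rho ->
    dup_wins_play A rho.

Definition dup_wins_game {V : finType} (A : aca V) (sigma sigma' : word V) : Prop :=
  exists f, dup_winning A sigma sigma' f.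

Definition delay_dominates_on {V : finType} (A : aca V) (s t : seq {set V} -> {set V})
    (gamma : word V) : Prop :=
  dup_wins_game A (comp t gamma) (comp s gamma).

Definition delay_dominates {V : finType} (I : {set V}) (A : aca V)
    (s t : seq {set V} -> {set V}) : Prop :=
  forall gamma, input_word I gamma -> delay_dominates_on A s t gamma.

Definition delay_dominant {V : finType} (I O : {set V}) (A : aca V)
    (s : seq {set V} -> {set V}) : Prop :=
  forall t, is_strategy I O t -> delay_dominates I A s t.

Definition remorsefree_dominant {V : finType} (I O : {set V}) (phi : ltl V)
    (s : seq {set V} -> {set V}) : Prop :=
  forall t, is_strategy I O t ->
    forall gamma, input_word I gamma ->
      ltl_sat (comp t gamma) phi -> ltl_sat (comp s gamma) phi.

From mathcomp Require Import all_boot zify.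
From Stdlib Require Import ClassicalEpsilon.
Set Implicit Arguments. Unset Strict Implicit. Unset Printing Implicit Defensive.

(* A winning Duplicator strategy in the game (A, sigma, sigma') turns an
   accepting run tree of A on sigma into one on sigma'.  Spoiler walks down
   the old run tree, always proposing the disjunct that it uses, and the
   new tree is labelled by the dominant states that Duplicator answers with.
   Every branch of the new tree thus yields a play consistent with the
   winning strategy whose alternative states follow a branch of the old
   tree; that branch eventually avoids the rejecting states, so the winning
   condition forces the dominant states, i.e. the labels of the new branch,
   to do so too.  Applied to comp t gamma and comp s gamma, and with
   L(A) = L(phi), this is remorsefree dominance. *)

Section PrefixChain.
Variables (X : Type) (x0 : X) (H : nat -> seq X).
Hypothesis H_ext : forall k, exists s, H k.+1 = H k ++ s.
Hypothesis H_size : forall k, k < size (H k).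

Definition chain_lim (i : nat) : X := nth x0 (H i) i.

Lemma chain_ext k m : k <= m -> exists s, H m = H k ++ s.
Proof.
elim: m => [|m IH]; first by rewrite leqn0 => /eqP ->; exists [::]; rewrite cats0.
rewrite leq_eqVlt => /predU1P [->|/IH [s Hm]]; first by exists [::]; rewrite cats0.
by have [s' ->] := H_ext m; rewrite Hm -catA; eexists.
Qed.

Lemma nth_chain_lim k i : i < size (H k) -> nth x0 (H k) i = chain_lim i.
Proof.
move=> ik; rewrite /chain_lim; have [s1 e1] := chain_ext (leq_maxl i k).
have [s2 e2] := chain_ext (leq_maxr i k).
have /(congr1 (fun s => nth x0 s i)) := etrans (esym e1) e2.
by rewrite !nth_cat H_size ik => ->.
Qed.

Lemma prefix_of_chain_lim k i :
  i < size (H k) -> prefix_of chain_lim i = take i.+1 (H k).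
Proof.
move=> ik; rewrite /prefix_of -(map_nth_iota0 x0) //.
apply/eq_in_map => j; rewrite mem_iota add0n ltnS => ji.
by rewrite nth_chain_lim // (leq_ltn_trans ji ik).
Qed.

End PrefixChain.

Lemma branch_size (T : seq nat -> Prop) b : branch T b -> forall k, size (b k) = k.
Proof.
case=> b0 hb; elim=> [|k IH]; first by rewrite b0.
by have [_ [n ->]] := hb k; rewrite size_rcons IH.
Qed.

Lemma branch_take (T : seq nat -> Prop) b :
  branch T b -> forall j k, j <= k -> take j (b k) = b j.
Proof.
move=> hb j; elim=> [|k IH].
  by rewrite leqn0 => /eqP ->; rewrite take0 hb.1.
rewrite leq_eqVlt => /predU1P [->|jk]; first by rewrite take_oversize // (branch_size hb).
have [_ [n ->]] := hb.2 k.
by rewrite -cats1 takel_cat ?IH // (branch_size hb).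
Qed.

Section DelaySimulation.
Variables (V : finType) (A : aca V) (sigma sigma' : word V).
Local Notation G := (gpos (aca_state A)).
Local Notation g := (ginit A).
Local Notation play_prefix := (is_play_prefix A sigma sigma').

Lemma play_prefix_rcons h d :
  play_prefix h -> gmove A sigma sigma' (last g h) d -> play_prefix (rcons h d).
Proof.
case=> [h_pos [h0 hmv]] mv; split; first by rewrite size_rcons.
split; first by rewrite nth_rcons h_pos.
move=> i; rewrite size_rcons ltnS => hi; rewrite !nth_rcons hi.
case: (ltngtP i.+1 (size h)) hi => [/hmv // | // | hsz _].
by rewrite -[i]/(i.+1.-1) hsz nth_last.
Qed.

Variable f : seq G -> G.

Definition consistent_prefix (h : seq G) : Prop :=
  play_prefix h /\
  forall i, i.+1 < size h -> dup_owned (nth g h i) -> nth g h i.+1 = f (take i.+1 h).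

Lemma consistent_prefix_rcons h d :
  consistent_prefix h -> gmove A sigma sigma' (last g h) d ->
  (dup_owned (last g h) -> d = f h) -> consistent_prefix (rcons h d).
Proof.
case=> pp hcons mv hd; split; first exact: play_prefix_rcons.
move=> i; rewrite size_rcons ltnS => hi; rewrite -cats1 takel_cat // cats1 !nth_rcons hi.
case: (ltngtP i.+1 (size h)) hi => [/hcons // | // | hsz _].
by rewrite hsz take_size -[i]/(i.+1.-1) hsz nth_last.
Qed.

Lemma chain_lim_consistent (H : nat -> seq G) :
  (forall k, exists s, H k.+1 = H k ++ s) -> (forall k, k < size (H k)) ->
  (forall k, consistent_prefix (H k)) ->
  is_play A sigma sigma' (chain_lim g H) /\ consistent_with A f (chain_lim g H).
Proof.
move=> Hext Hsz Hc; have Hsz1 k : k < size (H k.+1) by apply: ltnW (Hsz k.+1).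
split; first split.
- by rewrite /chain_lim; case: (Hc 0) => [[_ []]].
- move=> k; rewrite -!(nth_chain_lim g Hext Hsz (k := k.+1)) //.
  by case: (Hc k.+1) => [[_ [_ hmv]] _]; apply: hmv.
- move=> k; rewrite (prefix_of_chain_lim g Hext Hsz (Hsz1 k)).
  by rewrite -!(nth_chain_lim g Hext Hsz (k := k.+1)) //; apply: (Hc k.+1).2.
Qed.

Hypothesis f_legal : dup_strategy A sigma sigma' f.

Lemma consistent_prefix_dup h :
  consistent_prefix h -> dup_owned (last g h) -> consistent_prefix (rcons h (f h)).
Proof.
by move=> hc own; apply: consistent_prefix_rcons => //; apply: f_legal hc.1 own.
Qed.

Lemma dup_reply_D1 h p q c j :
  play_prefix h -> last g h = PosD1 p q c j ->
  exists2 c', f h = PosS2 p q c c' j & c' \in aca_delta A q (sigma' j).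
Proof.
move=> pp hl; have := f_legal pp; rewrite hl => /(_ isT).
by case: (f h) => // _ _ _ c' _ [-> -> -> -> c'd]; exists c'.
Qed.

Lemma dup_reply_D2 h p q c q' j :
  play_prefix h -> last g h = PosD2 p q c q' j ->
  exists2 p', f h = PosS1 p' q' j.+1 & p' \in c.
Proof.
move=> pp hl; have := f_legal pp; rewrite hl => /(_ isT).
by case: (f h) => // p' _ _ [-> -> p'c]; exists p'.
Qed.

Variables (T : seq nat -> Prop) (l : seq nat -> aca_state A).
Hypothesis T_run : run_tree A sigma T l.

Definition disjunct_of_children (y : seq nat) (c : {set aca_state A}) : Prop :=
  c \in aca_delta A (l y) (sigma (size y)) /\
  forall q, q \in c <-> exists n, T (rcons y n) /\ l (rcons y n) = q.

Definition child_with_label (y : seq nat) (p : aca_state A) (n : nat) : Prop :=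
  T (rcons y n) /\ l (rcons y n) = p.

Definition run_disjunct (y : seq nat) : {set aca_state A} :=
  epsilon (inhabits set0) (disjunct_of_children y).

Definition child_labelled (y : seq nat) (p : aca_state A) : nat :=
  epsilon (inhabits 0) (child_with_label y p).

Lemma run_disjunctP y : T y -> disjunct_of_children y (run_disjunct y).
Proof.
move=> Ty; apply: (epsilon_spec _ (disjunct_of_children y)).
have [_ [_ [_ hc]]] := T_run; have [c ? ?] := hc y Ty; by exists c.
Qed.

Lemma child_labelledP y p : T y -> p \in run_disjunct y ->
  child_with_label y p (child_labelled y p).
Proof.
move=> Ty /((run_disjunctP Ty).2 p) hp.
exact: (epsilon_spec _ (child_with_label y p)).
Qed.

(* One round of the game, played along the node y of the old run tree: the
   new tree's children are indexed by the position, in enum c', of the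
   dominant state that Spoiler picks from Duplicator's disjunct c'. *)
Definition round (h : seq G) (y : seq nat) (n : nat) : option (seq G * seq nat) :=
  let p := alt_state (last g h) in
  let q := dom_state (last g h) in
  let h1 := rcons h (PosD1 p q (run_disjunct y) (size y)) in
  let c' := if f h1 is PosS2 _ _ _ c' _ then c' else set0 in
  if n < #|c'| then
    let h3 := rcons (rcons h1 (f h1))
                (PosD2 p q (run_disjunct y) (nth q (enum c') n) (size y)) in
    Some (rcons h3 (f h3), rcons y (child_labelled y (alt_state (f h3))))
  else None.

Definition sim_state (x : seq nat) : option (seq G * seq nat) :=
  foldl (fun o n => obind (fun hy => round hy.1 hy.2 n) o) (Some ([:: g], [::])) x.

Lemma sim_state_rcons x n :
  sim_state (rcons x n) = obind (fun hy => round hy.1 hy.2 n) (sim_state x).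
Proof. by rewrite /sim_state foldl_rcons. Qed.

(* Each round spans four positions, the first three of which share the
   alternative state of the current node. *)
Definition alt_profile (h : seq G) (y : seq nat) : Prop :=
  forall i, i < size h -> alt_state (nth g h i) = l (take (i %/ 4) y).

Definition sim_inv (h : seq G) (y : seq nat) : Prop :=
  [/\ consistent_prefix h, T y, size h = (size y * 4).+1, alt_profile h y &
      exists q, last g h = PosS1 (l y) q (size y)].

Lemma alt_profile_round h y n s :
  alt_profile h y -> size h = (size y * 4).+1 ->
  [seq alt_state x | x <- s] = [:: l y; l y; l y; l (rcons y n)] ->
  alt_profile (h ++ s) (rcons y n).
Proof.
move=> hprof hsz hs i; rewrite size_cat nth_cat.
have s4 : size s = 4 by rewrite -(size_map alt_state) hs.
case: (ltnP i (size h)) => [ih _ | hi].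
  by rewrite hprof // -cats1 takel_cat //; lia.
have [r ->] : exists r, i = size h + r by exists (i - size h); lia.
rewrite s4 ltn_add2l addKn => r4.
rewrite -(nth_map g (l y)) ?s4 // hs hsz.
have take_y m : m = size y -> take m (rcons y n) = y.
  by move=> ->; rewrite -cats1 take_size_cat.
case: r r4 => [|[|[|[|r]]]] // _ /=; try by rewrite take_y //; lia.
by rewrite take_oversize // size_rcons; lia.
Qed.

Lemma round_spec h y : sim_inv h y ->
  exists q c', [/\ last g h = PosS1 (l y) q (size y),
    c' \in aca_delta A q (sigma' (size y)),
    forall n, #|c'| <= n -> round h y n = None &
    forall n, n < #|c'| -> exists2 hy, round h y n = Some hy &
      [/\ sim_inv hy.1 hy.2, dom_state (last g hy.1) = nth q (enum c') n,
          exists s, hy.1 = h ++ s & exists m, hy.2 = rcons y m]].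
Proof.
case=> hc Ty hsz hprof [q hl].
have [cd _] := run_disjunctP Ty.
set c := run_disjunct y.
set h1 := rcons h (PosD1 (l y) q c (size y)).
have hc1 : consistent_prefix h1 by apply: consistent_prefix_rcons => //; rewrite hl.
have [c' fh1 c'd] := dup_reply_D1 hc1.1 (last_rcons _ _ _).
exists q, c'; split => // n; rewrite /round hl /= -/c -/h1 fh1 /=.
  by rewrite ltnNge => ->.
move=> n_lt; rewrite n_lt.
set q' := nth q (enum c') n.
have q'c' : q' \in c' by rewrite -mem_enum mem_nth // -cardE.
set h3 := rcons (rcons h1 _) (PosD2 (l y) q c q' (size y)).
have hc3 : consistent_prefix h3.
  have := consistent_prefix_dup hc1; rewrite last_rcons fh1 => /(_ isT) hc2.
  by apply: consistent_prefix_rcons => //; rewrite last_rcons.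
have [p' fh3 p'c] := dup_reply_D2 hc3.1 (last_rcons _ _ _).
have [Tp' lp'] := child_labelledP Ty p'c.
have e4 : rcons h3 (f h3) = h ++ [:: PosD1 (l y) q c (size y);
    PosS2 (l y) q c c' (size y); PosD2 (l y) q c q' (size y);
    PosS1 p' q' (size y).+1].
  by rewrite fh3 /h3 /h1 -!cats1 -!catA.
have hc4 : consistent_prefix (rcons h3 (f h3)).
  by apply: consistent_prefix_dup => //; rewrite /h3 last_rcons.
exists (rcons h3 (f h3), rcons y (child_labelled y p')); first by rewrite fh3.
split=> /=; last by eexists.
- split=> //.
  + by rewrite e4 size_cat hsz size_rcons /=; lia.
  + by rewrite e4; apply: alt_profile_round => //=; rewrite lp'.
  + by exists q'; rewrite fh3 last_rcons size_rcons lp'.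
- by rewrite fh3 last_rcons.
- by rewrite e4; eexists.
Qed.

Lemma sim_stateP x hy : sim_state x = Some hy -> sim_inv hy.1 hy.2 /\ size hy.2 = size x.
Proof.
have [T0 [_ [l0 _]]] := T_run.
elim/last_ind: x hy => [|x n IH] hy.
  case=> <-; split=> //; split=> //.
  - by move=> [|i] //= _; rewrite l0.
  - by exists (aca_init A); rewrite l0.
rewrite sim_state_rcons; case E: (sim_state x) => [hy0|] //=.
have [inv0 sz0] := IH _ E.
have [q [c' [_ _ hnone hsome]]] := round_spec inv0.
case: (ltnP n #|c'|) => [/hsome [hy1 -> [inv1 _ _ [m e1]]] [<-] | /hnone -> //].
by split=> //; rewrite e1 !size_rcons sz0.
Qed.

Lemma sim_state_extends x n hy hy' :
  sim_state x = Some hy -> sim_state (rcons x n) = Some hy' ->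
  (exists s, hy'.1 = hy.1 ++ s) /\ exists m, hy'.2 = rcons hy.2 m.
Proof.
move=> E; rewrite sim_state_rcons E /=.
have [q [c' [_ _ hnone hsome]]] := round_spec (sim_stateP E).1.
case: (ltnP n #|c'|) => [/hsome [hy1 -> [_ _ ext1 ext2]] [<-] // | /hnone -> //].
Qed.

Definition sim_tree (x : seq nat) : Prop := isSome (sim_state x).

Definition sim_label (x : seq nat) : aca_state A :=
  dom_state (last g (odflt ([:: g], [::]) (sim_state x)).1).

Lemma sim_run_tree : run_tree A sigma' sim_tree sim_label.
Proof.
split=> //; split; first by move=> x n; rewrite /sim_tree sim_state_rcons; case: (sim_state x).
split=> // x; rewrite /sim_tree; case E: (sim_state x) => [[h y]|] // _.
have [inv sz] := sim_stateP E.
have [q [c' [hl c'd hnone hsome]]] := round_spec inv.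
exists c'; first by rewrite /sim_label E /= hl -sz.
move=> q'; split=> [q'c' | [n []]].
- have ni : index q' (enum c') < #|c'| by rewrite cardE index_mem mem_enum.
  have [hy hr [_ hdom _ _]] := hsome _ ni.
  exists (index q' (enum c')); rewrite /sim_tree /sim_label sim_state_rcons E /= hr.
  by rewrite hdom nth_index ?mem_enum.
- rewrite /sim_tree /sim_label sim_state_rcons E /=.
  case: (ltnP n #|c'|) => [n_lt | /hnone -> //].
  have [hy -> [_ hdom _ _]] := hsome _ n_lt; move=> _ /= <-.
  by rewrite hdom -mem_enum mem_nth // -cardE.
Qed.

Hypothesis f_wins : forall rho, is_play A sigma sigma' rho ->
  consistent_with A f rho -> dup_wins_play A rho.

Lemma sim_accepting : accepting_run A T l -> accepting_run A sim_tree sim_label.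
Proof.
move=> T_acc b b_br.
pose H k := odflt ([:: g], [::]) (sim_state (b k)).
have HE k : sim_state (b k) = Some (H k).
  by rewrite /H; move: (b_br.2 k).1; rewrite /sim_tree; case: (sim_state (b k)).
have Hinv k : sim_inv (H k).1 (H k).2 /\ size (H k).2 = k.
  by have [? ->] := sim_stateP (HE k); rewrite (branch_size b_br).
have Hnext k : (exists s, (H k.+1).1 = (H k).1 ++ s) /\ exists m, (H k.+1).2 = rcons (H k).2 m.
  have [_ [n en]] := b_br.2 k; have := HE k.+1; rewrite en; exact: sim_state_extends (HE k).
have Hsize k : size (H k).1 = (k * 4).+1 by case: (Hinv k) => [[_ _ -> _ _] ->].
have Hlt k : k < size (H k).1 by rewrite Hsize; lia.
pose rho := chain_lim g (fun k => (H k).1).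
have [rho_play rho_cons] : is_play A sigma sigma' rho /\ consistent_with A f rho.
  by apply: chain_lim_consistent => // [k | k]; [case: (Hnext k) | case: (Hinv k) => [[]]].
have T_br : branch T (fun k => (H k).2).
  split; first by move: (HE 0); rewrite b_br.1 => -[<-].
  by move=> k; split; [case: (Hinv k) => [[]] | case: (Hnext k)].
have [N hN] := T_acc _ T_br.
have alt_rho i : alt_state (rho i) = l (H (i %/ 4)).2.
  have [[_ _ _ prof _] _] := Hinv i.
  by rewrite /rho /chain_lim prof // (branch_take T_br) // leq_div.
have dom_rho k : dom_state (rho (k * 4)) = sim_label (b k).
  rewrite /sim_label HE /= /rho -(nth_chain_lim g (fun k => (Hnext k).1) Hlt (k := k)).
    by rewrite -[k * 4]/((k * 4).+1.-1) -Hsize nth_last.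
  by rewrite Hsize.
exists N => k kN; apply/negP => rej.
have rej4 : dom_state (rho (k * 4)) \in aca_rej A by rewrite dom_rho.
have [k' kk' rej'] := f_wins rho_play rho_cons rej4.
move: rej'; rewrite alt_rho; apply/negP; apply: hN.
by apply: leq_trans kN _; rewrite leq_divRL.
Qed.

End DelaySimulation.

Lemma dup_wins_game_accepts (V : finType) (A : aca V) (sigma sigma' : word V) :
  dup_wins_game A sigma sigma' -> aca_accepts A sigma -> aca_accepts A sigma'.
Proof.
move=> [f [f_legal f_wins]] [T [l [T_run T_acc]]].
eexists _, _; split; first exact: (sim_run_tree f_legal T_run).
exact: (sim_accepting f_legal T_run f_wins).
Qed.

Theorem theorem5 (V : finType) (I O : {set V})
  (hdisj : [disjoint I & O]) (hcov : I :|: O = [set: V])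
  (phi : ltl V) (A : aca V) (hwf : aca_wf A)
  (hlang : forall sigma : word V, aca_accepts A sigma <-> ltl_sat sigma phi)
  (s : seq {set V} -> {set V}) (hs : is_strategy I O s) :
  delay_dominant I O A s -> remorsefree_dominant I O phi s.
Proof.
move=> s_dom t t_strat gamma gamma_in t_sat.
apply/hlang; apply: dup_wins_game_accepts (s_dom t t_strat gamma gamma_in) _.
exact/hlang.
Qed.
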